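(* Let $N\ge2$, $n,m,p$ be positive integers, $A\in\mathbb{R}^{n\times n}$, $B\in\mathbb{R}^{n\times p}$, $C\in\mathbb{R}^{m\times n}$, $H\in\mathbb{R}^{n\times m}$, and $h>0$. Let $W=W_{circle}\in\mathbb{R}^{N\times N}$ have entries $w_{1,N}\neq0$, $w_{i,i-1}\neq0$ for $i=2,\dots,N$, and all other entries zero, and let $\Delta=\Delta_1=\mathrm{diag}(1,0,\dots,0)\in\mathbb{R}^{N\times N}$. Put $\mathcal{B}(h)=\int_0^h e^{A\tau}d\tau\,B$, $\mathcal{H}(h)=\int_0^h e^{A\tau}d\tau\,HC$, $\Phi_s=I_N\otimes e^{Ah}+W\otimes\mathcal{H}(h)$, $\Psi_s=\Delta\otimes\mathcal{B}(h)$. Let $v_1,\dots,v_N\in\mathbb{C}^{1\times N}$ be linearly independent row vectors with $v_kW=\lambda_kv_k$ ($\lambda_1,\dots,\lambda_N$ the eigenvalues of $W$), and $E_k=e^{Ah}+\lambda_k\mathcal{H}(h)$. Suppose: (2) the pair $(E_k,\mathcal{B}(h))$ is controllable for every $k=1,\dots,N$; (3) whenever $\theta\in\mathbb{C}$ is a common eigenvalue of $E_{k_1},\dots,E_{k_q}$ for distinct indices $k_1,\dots,k_q$ with $1<q\le N$, then $(v_{k_1}\otimes\xi_{k_1}+\dots+v_{k_q}\otimes\xi_{k_q})(\Delta\otimes\mathcal{B}(h))\neq0$ for all $\xi_j\in M(\theta\,|\,E_j)$, $j=k_1,\dots,k_q$, with $(\xi_{k_1},\dots,\xi_{k_q})\neq0$.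 Then the networked sampled-data system $X(k+1)=\Phi_sX(k)+\Psi_sU(k)$ is controllable.
   Context: The networked sampled-data system is the discrete-time system $X(k+1)=\Phi_sX(k)+\Psi_sU(k)$; it is called controllable if every initial state can be steered to the origin in finitely many steps. For $F\in\mathbb{C}^{q\times q}$, $G\in\mathbb{C}^{q\times s}$, the pair $(F,G)$ is called controllable if $\mathrm{rank}[sI_q-F,\ G]=q$ for every $s\in\mathbb{C}$. $M(\theta\,|\,E)=\{\xi:\ \xi E=\theta\xi\}$ is the left eigenspace of the square matrix $E$ for $\theta$. $\otimes$ is the Kronecker product. *)

From HB Require Import structures.
From mathcomp Require Import all_boot all_order all_algebra.
From mathcomp Require Import all_classical all_reals all_analysis.
From mathcomp Require Import mxtens complex.
Set Implicit Arguments. Unset Strict Implicit. Unset Printing Implicit Defensive.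
Import Order.TTheory GRing.Theory Num.Theory numFieldNormedType.Exports.
Local Open Scope ring_scope.

Section Defs.
Variable R : realType.

Definition expmx (n : nat) (A : 'M[R]_n) : 'M[R]_n :=
  \matrix_(i, j) limn (series (fun k : nat => (A ^+ k) i j / (k`!)%:R)).

Definition intexpmx (n : nat) (A : 'M[R]_n) (h : R) : 'M[R]_n :=
  \matrix_(i, j) Rintegral lebesgue_measure `[0, h]%classic
                   (fun tau : R => expmx (tau *: A) i j).

Fixpoint traj (q s : nat) (Phi : 'M[R]_q) (Psi : 'M[R]_(q, s))
  (X0 : 'cV[R]_q) (U : nat -> 'cV[R]_s) (k : nat) : 'cV[R]_q :=
  match k with
  | 0 => X0
  | k'.+1 => Phi *m traj Phi Psi X0 U k' + Psi *m U k'
  end.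

Definition ds_controllable (q s : nat) (Phi : 'M[R]_q) (Psi : 'M[R]_(q, s)) :=
  forall X0 : 'cV[R]_q, exists (K : nat) (U : nat -> 'cV[R]_s),
    traj Phi Psi X0 U K = 0.

Definition cmx (m n : nat) (A : 'M[R]_(m, n)) : 'M[R[i]]_(m, n) :=
  map_mx (fun x : R => real_complex R x) A.
End Defs.

Definition pair_controllable (K : fieldType) (q s : nat)
  (F : 'M[K]_q) (G : 'M[K]_(q, s)) :=
  forall z : K, \rank (row_mx (z%:M - F) G) = q.

Definition left_eig (K : fieldType) (q : nat) (theta : K) (E : 'M[K]_q)
  (xi : 'rV[K]_q) := xi *m E = theta *: xi.

From HB Require Import structures.
From mathcomp Require Import all_boot all_order all_algebra.
From mathcomp Require Import all_classical all_reals all_analysis.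
From mathcomp Require Import mxtens complex.
Import Order.TTheory GRing.Theory Num.Theory numFieldNormedType.Exports.
Local Open Scope ring_scope.

Set Implicit Arguments.
Unset Strict Implicit.
Unset Printing Implicit Defensive.

(* Popov-Belevitch-Hautus: the system is controllable as soon as no nonzero left
   eigenvector w of Phi_s (over C) satisfies w Psi_s = 0.  Indeed the reachable
   subspace stabilises after finitely many steps, and if it were proper its
   annihilator would be a nonzero Phi_s-invariant subspace killed by Psi_s, hence
   would contain such an eigenvector.
   Expand w = sum_k v_k (x) xi_k in the basis given by the left eigenvectors v_k of W.
   Since (v_k (x) xi) Phi_s = v_k (x) xi E_k, every xi_k is a left eigenvector of
   E_k for the same eigenvalue.  If two or more xi_k are nonzero, hypothesis (3)
   forbids w Psi_s = 0.  If exactly one is, w Psi_s = (v_k Delta) (x) (xi_k B(h)),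
   and v_k Delta <> 0 because a left eigenvector of the circle matrix W cannot
   vanish at the first node (the subdiagonal would propagate the zero to every
   node); so xi_k B(h) = 0, contradicting the controllability of (E_k, B(h)). *)

Section ReachSpace.
Variables (K : fieldType) (q s : nat) (Phi : 'M[K]_q) (Psi : 'M[K]_(q, s)).

(* The rows of [reach_space d] span the transposes of the states reachable from 0
   in d steps. *)
Fixpoint reach_space d : 'M[K]_q :=
  if d is d'.+1 then (Psi^T + reach_space d' *m Phi^T)%MS else 0.

Lemma reach_spaceS d : (reach_space d <= reach_space d.+1)%MS.
Proof. by elim: d => [|d IH] /=; rewrite ?sub0mx // addsmxS ?submxMr. Qed.

Lemma reach_space_stationary : exists d, (reach_space d.+1 <= reach_space d)%MS.
Proof.
case: (pselect (exists d, (reach_space d.+1 <= reach_space d)%MS)) => // growing.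
have rank_ge d : (d <= \rank (reach_space d))%N.
  elim: d => // d IH; apply: leq_ltn_trans IH (rank_ltmx _).
  by rewrite ltmxE reach_spaceS; apply/negP => stat; apply: growing; exists d.
by have := rank_ge q.+1; rewrite ltnNge rank_leq_col.
Qed.

End ReachSpace.

Lemma map_reach_space (K K' : fieldType) (f : {rmorphism K -> K'}) q s
    (Phi : 'M[K]_q) (Psi : 'M[K]_(q, s)) d :
  (map_mx f (reach_space Phi Psi d) :=: reach_space (map_mx f Phi) (map_mx f Psi) d)%MS.
Proof.
elim: d => [|d IH] /=; first by rewrite map_mx0.
apply: eqmx_trans (map_addsmx _ _ _) _.
by apply: adds_eqmx; rewrite ?map_mxM map_trmx //; apply: eqmxMr.
Qed.

Section Trajectory.
Variables (R : realType) (q s : nat) (Phi : 'M[R]_q) (Psi : 'M[R]_(q, s)).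

Lemma traj_split X0 U k : traj Phi Psi X0 U k = Phi ^+ k *m X0 + traj Phi Psi 0 U k.
Proof.
elim: k => [|k IH] /=; first by rewrite expr0 mul1mx addr0.
by rewrite IH mulmxDr mulmxA exprS mulmxE addrA.
Qed.

Lemma eq_traj X0 U U' k : (forall j, (j < k)%N -> U j = U' j) ->
  traj Phi Psi X0 U k = traj Phi Psi X0 U' k.
Proof. by elim: k => //= k IH eqU; rewrite eqU // IH // => j /leqW; exact: eqU. Qed.

Lemma reach_space_traj d (x : 'cV_q) : (x^T <= reach_space Phi Psi d)%MS ->
  exists U, traj Phi Psi 0 U d = x.
Proof.
elim: d x => [|d IH] x /=.
  by rewrite submx0 -trmx0 (inj_eq trmx_inj) => /eqP ->; exists (fun=> 0).
case/sub_addsmxP => -[u1 u2] /= xTE.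
have [U UE] : exists U, traj Phi Psi 0 U d = (u2 *m reach_space Phi Psi d)^T.
  by apply: IH; rewrite trmxK submxMl.
exists (fun j => if j == d then u1^T else U j) => /=.
rewrite eqxx (@eq_traj _ _ U) ?UE => [|j /ltn_eqF ->] //.
by rewrite -[x]trmxK xTE linearD /= !trmx_mul !trmxK mulmxA addrC.
Qed.

Lemma row_full_reach_space_controllable d :
  row_full (reach_space Phi Psi d) -> ds_controllable Phi Psi.
Proof.
move=> full X0; have [U UE] := reach_space_traj (submx_full (- (Phi ^+ d *m X0))^T full).
by exists d, U; rewrite traj_split UE subrr.
Qed.

End Trajectory.

Section PBHTest.
Variable K : closedFieldType.

Lemma stablemx_eigenvector q (V f : 'M[K]_q) : V != 0 -> stablemx V f ->
  exists2 w : 'rV_q, (w != 0) && (w <= V)%MS & stablemx w f.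
Proof.
move=> V0 Vf; set g := conjmx (row_base V) f.
have [a] : exists a, eigenvalue g a.
  have /closed_rootP[a ga] : size (char_poly g) != 1%N.
    by rewrite size_char_poly eqSS mxrank_eq0.
  by exists a; rewrite eigenvalue_root_char.
case/eigenvalueP => u ug u0; exists (u *m row_base V).
  by rewrite mulmx_free_eq0 ?row_base_free // u0 (submx_trans (submxMl _ _)) ?eq_row_base.
by rewrite -stablemx_restrict // ug scalemx_sub.
Qed.

Lemma pbh_row_full q s (Phi : 'M[K]_q) (Psi : 'M[K]_(q, s)) (S : 'M[K]_q) :
  (Psi^T <= S)%MS -> stablemx S Phi^T ->
  (forall theta (w : 'rV_q), w *m Phi = theta *: w -> w *m Psi = 0 -> w = 0) ->
  row_full S.
Proof.
move=> PsiS SPhi pbh; apply: contraT => notfull.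
have Ann0 : kermx S^T != 0.
  rewrite -mxrank_eq0 mxrank_ker mxrank_tr subn_eq0; apply: contra notfull => le.
  by rewrite /row_full eqn_leq rank_leq_col.
have AnnPhi : stablemx (kermx S^T) Phi.
  apply/sub_kermxP; rewrite -mulmxA -[Phi *m _]trmxK trmx_mul trmxK -(mulmxKpV SPhi).
  by rewrite trmx_mul mulmxA mulmx_ker mul0mx.
have [w /andP[w0 wAnn] /sub_rVP[theta wPhi]] := stablemx_eigenvector Ann0 AnnPhi.
have wS : w *m S^T = 0 by apply/sub_kermxP.
rewrite (pbh theta w) ?eqxx // in w0.
by rewrite -[Psi]trmxK -(mulmxKpV PsiS) trmx_mul mulmxA wS mul0mx.
Qed.

End PBHTest.

Lemma cmxE (R : realType) m n (X : 'M[R]_(m, n)) : cmx X = map_mx (real_complex R) X.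
Proof. by []. Qed.

Lemma pbh_ds_controllable (R : realType) q s (Phi : 'M[R]_q) (Psi : 'M[R]_(q, s)) :
  (forall theta (w : 'rV[R[i]]_q),
     w *m cmx Phi = theta *: w -> w *m cmx Psi = 0 -> w = 0) ->
  ds_controllable Phi Psi.
Proof.
move=> pbh; have [d] := reach_space_stationary (cmx Phi) (cmx Psi).
rewrite /= addsmx_sub => /andP[PsiS SPhi].
apply: (@row_full_reach_space_controllable _ _ _ _ _ d).
rewrite /row_full -(mxrank_map (real_complex R)) map_reach_space -!cmxE.
exact: pbh_row_full PsiS SPhi pbh.
Qed.

Section TensorAlgebra.
Variable K : comPzRingType.

Lemma tensmxDr m n p q (A : 'M[K]_(m, n)) (B C : 'M[K]_(p, q)) :
  A *t (B + C) = A *t B + A *t C.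
Proof. by apply/matrixP => i j; rewrite !mxE mulrDr. Qed.

Lemma tensmxZl m n p q c (A : 'M[K]_(m, n)) (B : 'M[K]_(p, q)) :
  (c *: A) *t B = c *: (A *t B).
Proof. by apply/matrixP => i j; rewrite !mxE mulrA. Qed.

Lemma tensmxZr m n p q c (A : 'M[K]_(m, n)) (B : 'M[K]_(p, q)) :
  A *t (c *: B) = c *: (A *t B).
Proof. by apply/matrixP => i j; rewrite !mxE mulrCA. Qed.

Lemma tensmx11 m n : (1%:M : 'M[K]_m) *t (1%:M : 'M[K]_n) = 1%:M.
Proof.
apply/matrixP => i j.
case: (mxtens_indexP i) => i1 i2; case: (mxtens_indexP j) => j1 j2.
rewrite tensmxE !mxE (can_eq (@mxtens_indexK _ _)) xpair_eqE.
by case: (i1 == j1); case: (i2 == j2); rewrite /= ?mulr1 ?mulr0 ?mul0r.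
Qed.

Definition tens_block N n (y : 'rV[K]_(N * n)) (k : 'I_N) : 'rV[K]_n :=
  \row_b y 0 (mxtens_index (k, b)).

Lemma sum_delta_tensE N n (eta : 'I_N -> 'rV[K]_n) i k b :
  (\sum_j (delta_mx 0 j : 'rV[K]_N) *t eta j) i (mxtens_index (k, b)) = eta k 0 b.
Proof.
case: (mxtens_indexP i) => i1 i2; rewrite [i1]ord1 [i2]ord1 summxE (bigD1 k) //=.
rewrite big1 => [|j jk]; rewrite tensmxE !mxE; first by rewrite !eqxx mul1r addr0.
by rewrite eq_sym (negbTE jk) andbF mul0r.
Qed.

Lemma tens_blockE N n (eta : 'I_N -> 'rV[K]_n) :
  tens_block (\sum_j (delta_mx 0 j : 'rV[K]_N) *t eta j) =1 eta.
Proof. by move=> k; apply/rowP => b; rewrite mxE sum_delta_tensE. Qed.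

Lemma tens_blockK N n (y : 'rV[K]_(N * n)) :
  \sum_k (delta_mx 0 k : 'rV[K]_N) *t tens_block y k = y.
Proof.
by apply/rowP => j; case: (mxtens_indexP j) => k b; rewrite sum_delta_tensE mxE.
Qed.

End TensorAlgebra.

Section TensorBasis.
Variables (K : fieldType) (N n : nat) (v : 'I_N -> 'rV[K]_N).
Hypothesis v_free : row_free (\matrix_k v k).

Let V := \matrix_k v k.

Let V_unit : V \in unitmx. Proof. by rewrite -row_free_unit. Qed.

Lemma sum_tens_basisE (eta : 'I_N -> 'rV[K]_n) :
  \sum_k v k *t eta k = (\sum_k (delta_mx 0 k : 'rV[K]_N) *t eta k) *m (V *t 1%:M).
Proof.
by rewrite mulmx_suml; apply: eq_bigr => k _; rewrite tensmx_mul mulmx1 -rowE rowK.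
Qed.

Lemma tens_basis_decomp (w : 'rV[K]_(N * n)) :
  exists xi : 'I_N -> 'rV[K]_n, w = \sum_k v k *t xi k.
Proof.
exists (tens_block (w *m (invmx V *t 1%:M))).
by rewrite sum_tens_basisE tens_blockK -mulmxA tensmx_mul mulVmx // mulmx1 tensmx11 mulmx1.
Qed.

Lemma tens_basis_inj (eta eta' : 'I_N -> 'rV[K]_n) :
  \sum_k v k *t eta k = \sum_k v k *t eta' k -> eta =1 eta'.
Proof.
rewrite !sum_tens_basisE => /(congr1 (mulmx^~ (invmx V *t 1%:M))).
rewrite -!mulmxA tensmx_mul mulmxV // mulmx1 tensmx11 !mulmx1 => eq_eta k.
by rewrite -(tens_blockE eta) eq_eta tens_blockE.
Qed.

End TensorBasis.

Definition circle_mx (K : pzRingType) N (W : 'M[K]_N) :=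
  forall i j : 'I_N,
    (W i j != 0) = ((val i == 0%N) && (val j == N.-1)) || (val i == (val j).+1).

Lemma circle_left_eig_head (K : fieldType) N (W : 'M[K]_N) (x : 'rV[K]_N) l
    (j0 : 'I_N) :
  circle_mx W -> x *m W = l *: x -> x != 0 -> val j0 = 0%N -> x 0 j0 != 0.
Proof.
move=> W_circle xW x0 j0_0; apply: contra x0 => /eqP xj0.
have x_zero t (j : 'I_N) : val j = t -> x 0 j = 0.
  elim: t j => [|t IH] j jt.
    by rewrite -xj0; congr (x 0 _); apply: val_inj; rewrite jt.
  have tN : (t.+1 < N)%N by rewrite -jt ltn_ord.
  pose j' := Ordinal (ltnW tN).
  have Wjj' : W j j' != 0 by rewrite W_circle jt eqxx orbT.
  have Wij' i : i != j -> W i j' = 0.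
    have tN' : (t == N.-1) = false by rewrite ltn_eqF // ltn_predRL.
    move=> ij; apply/eqP; rewrite -[_ == 0]negbK W_circle /= tN' andbF /=.
    by rewrite -jt val_eqE.
  move/rowP/(_ j'): (xW); rewrite !mxE (bigD1 j) //= big1 => [|i /Wij' ->].
    rewrite addr0 (IH j') // mulr0 => /eqP.
    by rewrite mulf_eq0 (negbTE Wjj') orbF => /eqP.
  by rewrite mulr0.
by apply/eqP/rowP => j; rewrite mxE; exact: x_zero.
Qed.

Lemma pair_controllable_left_eig (K : fieldType) q s
    (F : 'M[K]_q) (G : 'M[K]_(q, s)) theta xi :
  pair_controllable F G -> left_eig theta F xi -> xi *m G = 0 -> xi = 0.
Proof.
move=> /(_ theta) full xiF xiG; apply/eqP.
have free : row_free (row_mx (theta%:M - F) G) by rewrite /row_free full.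
rewrite -(mulmx_free_eq0 _ free).
by rewrite mul_mx_row mulmxBr mul_mx_scalar xiF subrr xiG row_mx0.
Qed.

Definition delta1_mx (K : pzRingType) N : 'M[K]_N :=
  \matrix_(i, j) ((val i == 0%N) && (val j == 0%N))%:R.

Lemma mulmx_delta1_head (K : pzRingType) N (x : 'rV[K]_N) (j0 : 'I_N) :
  val j0 = 0%N -> (x *m delta1_mx K N) 0 j0 = x 0 j0.
Proof.
move=> j0_0; rewrite mxE (bigD1 j0) //= big1 => [|i ij0]; rewrite !mxE j0_0 ?eqxx.
  by rewrite mulr1 addr0.
have /negbTE -> : val i != 0%N by rewrite -j0_0 val_eqE.
by rewrite mulr0.
Qed.

Section NetworkedPBH.
Variables (K : fieldType) (N n p : nat).
Variables (W : 'M[K]_N) (F G : 'M[K]_n) (B : 'M[K]_(n, p)).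
Variables (v : 'I_N -> 'rV[K]_N) (lambda : 'I_N -> K).
Hypothesis W_circle : circle_mx W.
Hypothesis v_free : row_free (\matrix_k v k).
Hypothesis v_eig : forall k, v k *m W = lambda k *: v k.

Local Notation E k := (F + lambda k *: G).
Local Notation Phi := (1%:M *t F + W *t G).
Local Notation Psi := (delta1_mx K N *t B).

Hypothesis E_controllable : forall k, pair_controllable (E k) B.
Hypothesis common_eig_Psi : forall (theta : K) (S : {set 'I_N}),
  (1 < #|S|)%N -> (forall k, k \in S -> eigenvalue (E k) theta) ->
  forall xi : 'I_N -> 'rV[K]_n,
    (forall k, k \in S -> left_eig theta (E k) (xi k)) ->
    (exists2 k, k \in S & xi k != 0) ->
    (\sum_(k in S) v k *t xi k) *m Psi != 0.

Lemma tens_eig_mulmx k (xi : 'rV[K]_n) : (v k *t xi) *m Phi = v k *t (xi *m E k).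
Proof.
by rewrite mulmxDr !tensmx_mul mulmx1 v_eig tensmxZl -tensmxZr -tensmxDr mulmxDr scalemxAr.
Qed.

Lemma tens_basis_left_eig theta (xi : 'I_N -> 'rV[K]_n) :
  (\sum_k v k *t xi k) *m Phi = theta *: \sum_k v k *t xi k ->
  forall k, left_eig theta (E k) (xi k).
Proof.
rewrite mulmx_suml scaler_sumr.
under eq_bigr do rewrite tens_eig_mulmx.
under [X in _ = X]eq_bigr do rewrite -tensmxZr.
exact: tens_basis_inj.
Qed.

Lemma tens_mulmx_Psi_eq0 k (xi : 'rV[K]_n) : (v k *t xi) *m Psi = 0 -> xi *m B = 0.
Proof.
pose j0 := Ordinal (leq_ltn_trans (leq0n k) (ltn_ord k)).
have vk0 : v k != 0.
  rewrite -(rowK v k) rowE mulmx_free_eq0 //; apply/eqP => /matrixP/(_ 0 k).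
  by rewrite !mxE !eqxx => /eqP; rewrite oner_eq0.
have vk_head : v k 0 j0 != 0.
  exact: (circle_left_eig_head (j0 := j0) W_circle (v_eig k) vk0 erefl).
move=> /matrixP vxiPsi; apply/rowP => b.
have := vxiPsi (mxtens_index (0, 0)) (mxtens_index (j0, b)).
rewrite tensmx_mul tensmxE mulmx_delta1_head // !mxE => /eqP.
by rewrite mulf_eq0 (negbTE vk_head) => /eqP.
Qed.

Lemma networked_pbh theta (w : 'rV[K]_(N * n)) :
  w *m Phi = theta *: w -> w *m Psi = 0 -> w = 0.
Proof.
have [xi ->] := tens_basis_decomp v_free w.
move=> /tens_basis_left_eig xi_eig wPsi.
set S := [set k | xi k != 0].
have sumS : \sum_k v k *t xi k = \sum_(k in S) v k *t xi k.
  rewrite (bigID (mem S)) /= [X in _ + X]big1 ?addr0 // => k.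
  by rewrite inE negbK => /eqP ->; rewrite tensmx0.
suff xi0 k : xi k = 0 by rewrite big1 // => k _; rewrite xi0 tensmx0.
apply/eqP/negPn/negP => xik0; have kS : k \in S by rewrite inE.
have [S2 | S1] := ltnP 1 #|S|.
  have S_eig j : j \in S -> eigenvalue (E j) theta.
    by rewrite inE => xij0; apply/eigenvalueP; exists (xi j); first exact: xi_eig.
  have := common_eig_Psi S2 S_eig (fun j _ => xi_eig j) (ex_intro2 _ _ k kS _).
  by rewrite -sumS wPsi eqxx => /(_ xik0).
rewrite sumS (big_pred1 k) in wPsi; last exact: (card_le1P S1) k kS.
have := tens_mulmx_Psi_eq0 wPsi.
move/(pair_controllable_left_eig (E_controllable k) (xi_eig k))/eqP.
exact/negP.
Qed.

End NetworkedPBH.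

Theorem corollary7 (R : realType) (N n m p : nat)
  (hN : (2 <= N)%N) (hn : (0 < n)%N) (hm : (0 < m)%N) (hp : (0 < p)%N)
  (A : 'M[R]_n) (B : 'M[R]_(n, p)) (C : 'M[R]_(m, n)) (H : 'M[R]_(n, m))
  (h : R) (hh : 0 < h)
  (W : 'M[R]_N)
  (hWnz : forall i j : 'I_N,
     ((val i == 0%N) && (val j == N.-1)) || (val i == (val j).+1) -> W i j != 0)
  (hWz : forall i j : 'I_N,
     ~~ (((val i == 0%N) && (val j == N.-1)) || (val i == (val j).+1)) -> W i j = 0)
  (v : 'I_N -> 'rV[R[i]]_N) (lambda : 'I_N -> R[i])
  (hvind : row_free (\matrix_(k < N) v k))
  (hveig : forall k, v k *m cmx W = lambda k *: v k) :
  let Delta : 'M[R]_N := \matrix_(i, j) ((val i == 0%N) && (val j == 0%N))%:R in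
  let Bh : 'M[R]_(n, p) := intexpmx A h *m B in
  let Hh : 'M[R]_n := intexpmx A h *m (H *m C) in
  let Phi_s := (1%:M : 'M[R]_N) *t expmx (h *: A) + W *t Hh in
  let Psi_s := Delta *t Bh in
  let E := fun k : 'I_N => cmx (expmx (h *: A)) + lambda k *: cmx Hh in
  (forall k : 'I_N, pair_controllable (E k) (cmx Bh)) ->
  (forall (theta : R[i]) (S : {set 'I_N}),
     (1 < #|S|)%N ->
     (forall k, k \in S -> eigenvalue (E k) theta) ->
     forall xi : 'I_N -> 'rV[R[i]]_n,
       (forall k, k \in S -> left_eig theta (E k) (xi k)) ->
       (exists2 k, k \in S & xi k != 0) ->
       (\sum_(k in S) (v k *t xi k)) *m cmx Psi_s != 0) ->
  ds_controllable Phi_s Psi_s.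
Proof.
move=> Delta Bh Hh Phi_s Psi_s E E_controllable common_eig_Psi.
have cmx_Psi : cmx Psi_s = delta1_mx R[i] N *t cmx Bh.
  by rewrite !cmxE map_mxT; congr (_ *t _); apply/matrixP => i j; rewrite !mxE rmorph_nat.
have cmx_Phi : cmx Phi_s = 1%:M *t cmx (expmx (h *: A)) + cmx W *t cmx Hh.
  by rewrite !cmxE map_mxD !map_mxT map_mx1.
have W_circle : circle_mx (cmx W).
  move=> i j; rewrite cmxE mxE fmorph_eq0.
  by case: (boolP (_ || _)) => [/hWnz | /hWz ->]; rewrite ?eqxx.
rewrite cmx_Psi in common_eig_Psi.
apply: pbh_ds_controllable => theta w; rewrite cmx_Phi cmx_Psi.
exact: (networked_pbh W_circle hvind hveig E_controllable common_eig_Psi).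
Qed.
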